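(* Let $\alpha,\beta,p,q\in\mathbb{C}$ be constants with $p^2\neq q^2$, and set $s^2=\alpha^2-p^2$, $\mu^2=\alpha^2-q^2$, $t^2=\beta^2-p^2$, $\nu^2=\beta^2-q^2$. Let $h,g:\mathbb{Z}^2\to\mathbb{C}$ satisfy $\widehat{h}-\widetilde{h}=\widetilde{\widetilde{g}}-g$ and $(h+\widetilde g)g=\beta^2-\alpha^2$. Let $\varphi_1,\varphi_2$ be two linearly independent solutions of $$\widetilde{\widetilde{\varphi}}+h\,\widetilde{\varphi}+\alpha^2\varphi=p^2\varphi,\qquad \widehat{\varphi}=\widetilde{\varphi}-g\,\varphi,$$ and $\phi_1,\phi_2$ two linearly independent solutions of $$\widetilde{\widetilde{\phi}}+h\,\widetilde{\phi}+\alpha^2\phi=q^2\phi,\qquad \widehat{\phi}=\widetilde{\phi}-g\,\phi .$$ Let $\rho_1,\rho_2$ be the constants with $\varphi_1\widetilde\varphi_2-\varphi_2\widetilde\varphi_1=\rho_1 s^{2n}t^{2m}$ and $\phi_1\widetilde\phi_2-\phi_2\widetilde\phi_1=\rho_2\mu^{2n}\nu^{2m}$. Let $M=\begin{pmatrix}A&B\\C&D\end{pmatrix}$ be a constant matrix, $\langle\Phi_p|=(\varphi_1\ \ \varphi_2)$, $|\Phi_q\rangle=(\phi_1\ \ \phi_2)^{\intercal}$, and $$Y=\langle\Phi_p|M|\widetilde{\Phi}_q\rangle-\langle\widetilde{\Phi}_p|M|\Phi_q\rangle=\sum_{i,j=1}^2 M_{ij}\big(\varphi_i\widetilde{\phi}_j-\phi_j\widetilde{\varphi}_i\big).$$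 Then $Y$ satisfies the leKdV-II$(\delta)$ equation $$s^2\mu^2Y\widehat{Y}+\widetilde{Y}\widehat{\widetilde{Y}}-t^2\nu^2Y\widetilde{Y}-\widehat{Y}\widehat{\widetilde{Y}}=(\alpha^2-\beta^2)\Big(Y\widehat{\widetilde{Y}}+\widetilde{Y}\widehat{Y}+\delta\,(p^2-q^2)^2s^{2n}\mu^{2n}t^{2m}\nu^{2m}\Big)$$ with $\delta=\rho_1\rho_2\det M$.
   Context: Shift notation: for a function $f$ on $\mathbb{Z}^2$ (variables $n,m$), $\widetilde f(n,m)=f(n+1,m)$, $\widehat f(n,m)=f(n,m+1)$, and combined accents denote composed shifts; accents on vectors act componentwise. $M_{11}=A$, $M_{12}=B$, $M_{21}=C$, $M_{22}=D$. *)

From mathcomp Require Import all_boot all_algebra reals.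
From mathcomp Require Export complex.
Set Implicit Arguments. Unset Strict Implicit. Unset Printing Implicit Defensive.
Import GRing.Theory Num.Theory.
Local Open Scope ring_scope.

(* Shifts on functions of (n, m) in Z^2:
   tilde f (n,m) = f (n+1, m), hat f (n,m) = f (n, m+1). *)
Definition tl {T : Type} (f : int -> int -> T) : int -> int -> T :=
  fun n m => f (n + 1)%R m.
Definition ht {T : Type} (f : int -> int -> T) : int -> int -> T :=
  fun n m => f n (m + 1)%R.

Definition lin_indep2 {K : pzRingType} (f : 'I_2 -> int -> int -> K) : Prop :=
  forall c : 'I_2 -> K,
    (forall n m, \sum_(i < 2) c i * f i n m = 0) -> forall i, c i = 0.

Definition Yfun {K : pzRingType} (M : 'M[K]_2) (vphi phi : 'I_2 -> int -> int -> K)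
  : int -> int -> K :=
  fun n m => \sum_(i < 2) \sum_(j < 2)
     M i j * (vphi i n m * tl (phi j) n m - phi j n m * tl (vphi i) n m).

From mathcomp Require Import all_boot all_algebra reals.
From mathcomp Require Import complex.
From mathcomp Require Import ring.
Import GRing.Theory.
Local Open Scope ring_scope.

(* Write Y = P - Q with P = <Phi_p|M|~Phi_q> and Q = <~Phi_p|M|Phi_q>, and let
   Z = <Phi_p|M|Phi_q>.  The two spectral problems express ~Y, ^Y and ^~Y as
   linear combinations of P, Q, Z and ~Z with coefficients in h and g.  Once
   beta^2 is eliminated through (h + ~g) g = beta^2 - alpha^2, the leKdV-II
   relation becomes a polynomial identity whose inhomogeneous term is
   (p^2 - q^2)^2 (Z ~Z - P Q), and by the 2x2 Cauchy-Binet formula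
   Z ~Z - P Q = det M times the product of the two Casoratians. *)

Lemma big_ord2 (V : nmodType) (F : 'I_2 -> V) : \sum_(i < 2) F i = F 0 + F 1.
Proof. by rewrite big_ord_recl big_ord1; congr (F _ + F _); apply/val_inj. Qed.

Lemma det_mx22 (K : comPzRingType) (M : 'M[K]_2) :
  \det M = M 0 0 * M 1 1 - M 0 1 * M 1 0.
Proof.
rewrite (expand_det_row _ 0) big_ord2 /cofactor !det_mx11 !mxE /=.
rewrite expr0 expr1 mul1r mulN1r mulrN.
by congr (_ * M _ _ - _ * M _ _); apply/val_inj.
Qed.

Section BilinearForm.
Local Set Implicit Arguments.
Local Unset Strict Implicit.
Variables (K : comPzRingType) (M : 'M[K]_2).

Definition bform (x y : 'I_2 -> K) : K :=
  \sum_(i < 2) \sum_(j < 2) M i j * (x i * y j).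

Lemma bformE x y :
  bform x y = M 0 0 * (x 0 * y 0) + M 0 1 * (x 0 * y 1)
            + M 1 0 * (x 1 * y 0) + M 1 1 * (x 1 * y 1).
Proof. by rewrite /bform !big_ord2 addrA. Qed.

Lemma bform_cauchy_binet x y x' y' :
  bform x y * bform x' y' - bform x y' * bform x' y
  = \det M * (x 0 * x' 1 - x 1 * x' 0) * (y 0 * y' 1 - y 1 * y' 0).
Proof. by rewrite !bformE det_mx22; ring. Qed.

Lemma Yfun_bform (f1 f2 : 'I_2 -> int -> int -> K) n m :
  Yfun M f1 f2 n m = bform (fun i => f1 i n m) (fun j => tl (f2 j) n m)
                   - bform (fun i => tl (f1 i) n m) (fun j => f2 j n m).
Proof.
rewrite /Yfun /bform -sumrB; apply: eq_bigr => i _.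
by rewrite -sumrB; apply: eq_bigr => j _; ring.
Qed.

End BilinearForm.

Definition casoratian {K : pzRingType} (f : 'I_2 -> int -> int -> K) n m : K :=
  f 0 n m * tl (f 1) n m - f 1 n m * tl (f 0) n m.

Section LaxPair.
Local Set Implicit Arguments.
Local Unset Strict Implicit.
Variables (K : comPzRingType) (a : K) (h g : int -> int -> K).

Definition lax_solution (lam : K) (f : int -> int -> K) : Prop :=
  (forall n m, tl (tl f) n m + h n m * tl f n m + a * f n m = lam * f n m) /\
  (forall n m, ht f n m = tl f n m - g n m * f n m).

Variables (lam : K) (f : int -> int -> K).
Hypothesis f_sol : lax_solution lam f.

Lemma lax_tl2 n m : f (n + 1 + 1) m = - (a - lam) * f n m - h n m * f (n + 1) m.
Proof. by rewrite mulNr mulrBl -(f_sol.1 n m) /tl; ring. Qed.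

Lemma lax_ht n m : f n (m + 1) = f (n + 1) m - g n m * f n m.
Proof. exact: f_sol.2. Qed.

Lemma lax_ht_tl n m :
  f (n + 1) (m + 1) = - (a - lam) * f n m - (h n m + g (n + 1) m) * f (n + 1) m.
Proof. by rewrite lax_ht lax_tl2; ring. Qed.

End LaxPair.

Section DressedPotential.
Local Set Implicit Arguments.
Local Unset Strict Implicit.
(* [a], [b], [pp], [qq] stand for alpha^2, beta^2, p^2, q^2. *)
Variables (K : comPzRingType) (a b pp qq : K) (h g : int -> int -> K).
Hypothesis hg : forall n m, (h n m + tl g n m) * g n m = b - a.
Variables (M : 'M[K]_2) (vphi phi : 'I_2 -> int -> int -> K).
Hypothesis vphi_sol : forall i, lax_solution a h g pp (vphi i).
Hypothesis phi_sol : forall i, lax_solution a h g qq (phi i).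

Let vphi_at n m := fun i => vphi i n m.
Let phi_at n m := fun j => phi j n m.
Let P n m := bform M (vphi_at n m) (phi_at (n + 1) m).
Let Q n m := bform M (vphi_at (n + 1) m) (phi_at n m).
Let Z n m := bform M (vphi_at n m) (phi_at n m).
Let Y := Yfun M vphi phi.

Lemma Yfun_PQ n m : Y n m = P n m - Q n m.
Proof. exact: Yfun_bform. Qed.

Lemma Yfun_tl n m : Y (n + 1) m = (a - pp) * P n m - (a - qq) * Q n m.
Proof.
rewrite Yfun_PQ /P /Q /vphi_at /phi_at !bformE.
by rewrite !(lax_tl2 (vphi_sol _)) !(lax_tl2 (phi_sol _)); ring.
Qed.

Let k n m := h n m + g (n + 1) m.

Lemma P_ht n m :
  P n (m + 1) = - (a - qq) * Q n m - k n m * Z (n + 1) m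
                + g n m * (a - qq) * Z n m + g n m * k n m * P n m.
Proof.
rewrite /P /Q /Z /k /vphi_at /phi_at !bformE.
by rewrite !(lax_ht (vphi_sol _)) !(lax_ht_tl (phi_sol _)); ring.
Qed.

Lemma Q_ht n m :
  Q n (m + 1) = - (a - pp) * P n m - k n m * Z (n + 1) m
                + g n m * (a - pp) * Z n m + g n m * k n m * Q n m.
Proof.
rewrite /P /Q /Z /k /vphi_at /phi_at !bformE.
by rewrite !(lax_ht_tl (vphi_sol _)) !(lax_ht (phi_sol _)); ring.
Qed.

Lemma Z_casoratian n m :
  \det M * casoratian vphi n m * casoratian phi n m
  = Z n m * Z (n + 1) m - P n m * Q n m.
Proof. by rewrite bform_cauchy_binet. Qed.

Lemma Yfun_leKdV2 n m :
  (a - pp) * (a - qq) * Y n m * ht Y n m + tl Y n m * ht (tl Y) n m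
  - (b - pp) * (b - qq) * Y n m * tl Y n m - ht Y n m * ht (tl Y) n m
  = (a - b) * (Y n m * ht (tl Y) n m + tl Y n m * ht Y n m
     + (pp - qq) ^+ 2 * (\det M * casoratian vphi n m * casoratian phi n m)).
Proof.
rewrite /tl /ht !Yfun_tl !Yfun_PQ P_ht Q_ht Z_casoratian.
have -> : b = a + g n m * k n m by rewrite mulrC hg; ring.
ring.
Qed.

End DressedPotential.

Theorem proposition4p2 (R : realType) (alpha beta p q : R[i])
  (hpq : p ^+ 2 != q ^+ 2)
  (h g : int -> int -> R[i])
  (Hhg1 : forall n m, ht h n m - tl h n m = tl (tl g) n m - g n m)
  (Hhg2 : forall n m, (h n m + tl g n m) * g n m = beta ^+ 2 - alpha ^+ 2)
  (vphi phi : 'I_2 -> int -> int -> R[i])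
  (Hv1 : forall i n m, tl (tl (vphi i)) n m + h n m * tl (vphi i) n m
                         + alpha ^+ 2 * vphi i n m = p ^+ 2 * vphi i n m)
  (Hv2 : forall i n m, ht (vphi i) n m = tl (vphi i) n m - g n m * vphi i n m)
  (Hvind : lin_indep2 vphi)
  (Hp1 : forall i n m, tl (tl (phi i)) n m + h n m * tl (phi i) n m
                         + alpha ^+ 2 * phi i n m = q ^+ 2 * phi i n m)
  (Hp2 : forall i n m, ht (phi i) n m = tl (phi i) n m - g n m * phi i n m)
  (Hpind : lin_indep2 phi)
  (rho1 rho2 : R[i])
  (Hrho1 : forall n m, vphi 0 n m * tl (vphi 1) n m - vphi 1 n m * tl (vphi 0) n m
             = rho1 * (alpha ^+ 2 - p ^+ 2) ^ n * (beta ^+ 2 - p ^+ 2) ^ m)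
  (Hrho2 : forall n m, phi 0 n m * tl (phi 1) n m - phi 1 n m * tl (phi 0) n m
             = rho2 * (alpha ^+ 2 - q ^+ 2) ^ n * (beta ^+ 2 - q ^+ 2) ^ m)
  (M : 'M[R[i]]_2) :
  let s2 := alpha ^+ 2 - p ^+ 2 in
  let mu2 := alpha ^+ 2 - q ^+ 2 in
  let t2 := beta ^+ 2 - p ^+ 2 in
  let nu2 := beta ^+ 2 - q ^+ 2 in
  let delta := rho1 * rho2 * \det M in
  let Y := Yfun M vphi phi in
  forall n m : int,
    s2 * mu2 * Y n m * ht Y n m + tl Y n m * ht (tl Y) n m
    - t2 * nu2 * Y n m * tl Y n m - ht Y n m * ht (tl Y) n m
    = (alpha ^+ 2 - beta ^+ 2)
      * (Y n m * ht (tl Y) n m + tl Y n m * ht Y n m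
         + delta * (p ^+ 2 - q ^+ 2) ^+ 2
           * s2 ^ n * mu2 ^ n * t2 ^ m * nu2 ^ m).
Proof.
move=> s2 mu2 t2 nu2 delta Y n m.
have vphi_sol i : lax_solution (alpha ^+ 2) h g (p ^+ 2) (vphi i) by split.
have phi_sol i : lax_solution (alpha ^+ 2) h g (q ^+ 2) (phi i) by split.
rewrite (Yfun_leKdV2 Hhg2 M vphi_sol phi_sol) /casoratian Hrho1 Hrho2.
rewrite /delta; congr (_ * (_ + _)); ring.
Qed.
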